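(* Let $p$ be a prime, $a,b\in\mathbb{Z}_p$, and $Q=Q_{a,b}(\mathbb{Z}_p)$. Then: (i) if $(a,b)=(0,0)$ and $p\ne3$, $Q$ has exponent $p$; (ii) if $(a,b)\ne(0,0)$ or $p=3$, $Q$ has exponent $p^2$; (iii) if $a=0$, then $N_\mu(Q)\cong\mathbb{Z}_p\times\mathbb{Z}_p$; (iv) if $a\ne0$, then $N_\mu(Q)\cong\mathbb{Z}_{p^2}$.
   Context: Identify $\mathbb{Z}_p$ with $\{0,\dots,p-1\}$. The overflow indicator is $(x,y)_p=1$ if $x+y\ge p$ as integers and $0$ otherwise. $Q_{a,b}(\mathbb{Z}_p)$ is $\mathbb{Z}_p^3$ with multiplication $(x_1,x_2,x_3)(y_1,y_2,y_3)=(x_1+y_1+(x_2+y_2)x_3y_3+a(x_2,y_2)_p+b(x_3,y_3)_p,\ x_2+y_2,\ x_3+y_3)$, a power-associative commutative loop. The exponent is the least $e\ge1$ with $u^e$ equal to the neutral element for all $u$. $N_\mu(Q)=\{y:(xy)z=x(yz)\ \forall x,z\}$, which here is a group. *)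

From HB Require Import structures.
From mathcomp Require Import all_boot all_order all_algebra.
Set Implicit Arguments. Unset Strict Implicit. Unset Printing Implicit Defensive.
Import GRing.Theory.
Local Open Scope ring_scope.

Definition ovf (p : nat) (x y : 'Z_p) : bool := (p <= val x + val y)%N.

Definition Qcar (p : nat) := ('Z_p * 'Z_p * 'Z_p)%type.

Definition qmul (p : nat) (a b : 'Z_p) (x y : Qcar p) : Qcar p :=
  let: (x1, x2, x3) := x in
  let: (y1, y2, y3) := y in
  (x1 + y1 + (x2 + y2) * x3 * y3 + a *+ ovf x2 y2 + b *+ ovf x3 y3,
   x2 + y2, x3 + y3).

Definition qone (p : nat) : Qcar p := (0, 0, 0).

(* u^n, well defined since the loop is power-associative *)
Definition qpow (p : nat) (a b : 'Z_p) (u : Qcar p) (n : nat) : Qcar p :=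
  iter n (fun v => qmul a b v u) (qone p).

Definition has_exponent (p : nat) (a b : 'Z_p) (e : nat) : Prop :=
  (0 < e)%N /\ (forall u, qpow a b u e = qone p) /\
  (forall e', (0 < e')%N -> (forall u, qpow a b u e' = qone p) -> (e <= e')%N).

Definition Nmu (p : nat) (a b : 'Z_p) : {set Qcar p} :=
  [set y | [forall x, [forall z,
     qmul a b (qmul a b x y) z == qmul a b x (qmul a b y z)]]].

Definition iso_to (T : finType) (N : {set T}) (mul : T -> T -> T)
  (V : zmodType) : Prop :=
  exists f : T -> V,
    [/\ {in N &, injective f},
        (forall v, exists2 x, x \in N & f x = v) &
        {in N &, forall x y, f (mul x y) = f x + f y}].

(* Writing u = (x1, x2, x3), an induction on n gives the closed form
     u^n = (n x1 + T(n) x2 x3^2 + a (x2 n div p) + b (x3 n div p), n x2, n x3),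
   where T(n) = sum_{k<n} (k+1) k is the sum of the first oblong numbers and
   the two division terms count the overflows accumulated by the 2nd and 3rd
   coordinates.  Since 3 T(n) = (n+1) n (n-1), the prime p divides T(p) unless
   p = 3, and it always divides T(p^2).  Hence u^p = 1 when a = b = 0, p <> 3,
   and u^(p^2) = 1 always; evaluating at (1,0,0), (0,1,0), (0,0,1) and (0,1,1)
   shows conversely that p, resp. p^2, divides every exponent.

   For the nucleus, the overflow (x,y)_p is a 2-cocycle (both ways of adding
   three digits produce the same total carry), so N_mu(Q) = {(y1, y2, 0)},
   on which the product is (x1 + y1 + a (x2,y2)_p, x2 + y2, 0).  For a = 0 this
   is Z_p x Z_p; for a <> 0 the map (y1, y2, 0) |-> y2 + p (y1 / a) reads the
   element as a two-digit base-p number and is an isomorphism onto Z_(p^2). *)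

From mathcomp Require Import all_boot all_order all_algebra zify ring.
Set Implicit Arguments. Unset Strict Implicit. Unset Printing Implicit Defensive.
Import GRing.Theory.

(* T(n) = sum_{k<n} (k+1) k: the coefficient of x2 x3^2 in the first coordinate of u^n. *)
Fixpoint oblong_sum (n : nat) : nat :=
  if n is m.+1 then oblong_sum m + m.+1 * m else 0.

Lemma oblong_sum_closed n : 3 * oblong_sum n.+1 = n.+2 * n.+1 * n.
Proof.
elim: n => [//|n IH] /=.
by rewrite mulnDr IH [3 * _]mulnC -mulnDr addn3 mulnC mulnA.
Qed.

Lemma dvdn_3_oblong_sum n : n %| 3 * oblong_sum n.
Proof. by case: n => [//|n]; rewrite oblong_sum_closed dvdn_mulr // dvdn_mull. Qed.

Lemma dvdn_oblong_sum p n : prime p -> p != 3 -> p %| n -> p %| oblong_sum n.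
Proof.
move=> pr_p p_neq3 p_n.
have cop3 : coprime p 3 by rewrite prime_coprime // dvdn_prime2.
by rewrite -(Gauss_dvdr _ cop3) (dvdn_trans p_n) ?dvdn_3_oblong_sum.
Qed.

(* For p = 3 the factor 3 is lost, but T(3m) = 9 m^3 - m still decides 3 | m. *)
Lemma oblong_sum_mul3 m : oblong_sum (3 * m) + m = 9 * m ^ 3.
Proof.
case: m => [//|m]; have := oblong_sum_closed (3 * m).+2.
have -> : (3 * m).+3 = 3 * m.+1 by rewrite mulnS.
nia.
Qed.

Lemma dvd3_oblong_sum_mul3 m : (3 %| oblong_sum (3 * m)) = (3 %| m).
Proof.
have three_sum : 3 %| oblong_sum (3 * m) + m.
  by rewrite oblong_sum_mul3 (dvdn_mulr _ (isT : 3 %| 9)).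
by apply/idP/idP => d3; [rewrite -(dvdn_addr _ d3) | rewrite -(dvdn_addl _ d3)].
Qed.

Lemma base_p_digits_inj p v w v' w' :
  0 < p -> v < p -> v' < p -> v + p * w = v' + p * w' -> v = v' /\ w = w'.
Proof.
move=> p_gt0 v_lt v'_lt vw_eq.
have := congr1 (divn^~ p) vw_eq; have := congr1 (modn^~ p) vw_eq.
rewrite /= ![(_ + p * _)%N]addnC ![(p * _)%N]mulnC !modnMDl !divnMDl //.
by rewrite !modn_small // !divn_small // !addn0.
Qed.

Local Open Scope ring_scope.

Section ZpCarry.
Variable p : nat.
Hypothesis p_gt1 : (1 < p)%N.
Let p_gt0 : (0 < p)%N := ltnW p_gt1.

Lemma Zp_val_lt (x : 'Z_p) : (val x < p)%N.
Proof. by case: x => x /=; rewrite Zp_cast. Qed.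

Lemma Zp_val_inZp n : val (inZp n : 'Z_p) = (n %% p)%N.
Proof. by rewrite /= Zp_cast. Qed.

Lemma Zp_val_add (x y : 'Z_p) : val (x + y) = ((val x + val y) %% p)%N.
Proof. exact: Zp_val_inZp. Qed.

Lemma Zp_val1 : val (1 : 'Z_p) = 1%N.
Proof. by rewrite /= Zp_cast // modn_small. Qed.

Lemma Zp_addE (x y : 'Z_p) : inZp (val x + val y) = x + y.
Proof. by apply: val_inj; rewrite Zp_val_inZp Zp_val_add. Qed.

Lemma divn_add_Zp m (z : 'Z_p) :
  ((m + val z) %/ p = m %/ p + ovf (inZp m) z)%N.
Proof.
rewrite divnD // (divn_small (Zp_val_lt z)) (modn_small (Zp_val_lt z)).
by rewrite addn0 /ovf Zp_val_inZp.
Qed.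

Lemma ovfE (x y : 'Z_p) : ovf x y = ((val x + val y) %/ p)%N :> nat.
Proof. by rewrite divn_add_Zp (divn_small (Zp_val_lt x)) valZpK. Qed.

Lemma ovfC (x y : 'Z_p) : ovf x y = ovf y x.
Proof. by rewrite /ovf addnC. Qed.

(* Both sides count the carries of val x + val y + val z, i.e. its quotient by p. *)
Lemma ovf_cocycle (x y z : 'Z_p) :
  (ovf x y + ovf (x + y)%R z = ovf y z + ovf x (y + z)%R)%N.
Proof.
rewrite [ovf x (_ + _)%R]ovfC (ovfE x y) (ovfE y z) -!Zp_addE.
by rewrite -!divn_add_Zp [(val y + val z + _)%N]addnC addnA.
Qed.

Lemma ovf0r (x : 'Z_p) : ovf x 0 = false.
Proof. by rewrite /ovf addn0 leqNgt Zp_val_lt. Qed.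

Lemma ovf0l (x : 'Z_p) : ovf 0 x = false.
Proof. by rewrite ovfC ovf0r. Qed.

Lemma divn_mulSn_Zp (x : 'Z_p) n :
  ((val x * n.+1) %/ p = (val x * n) %/ p + ovf (x *+ n) x)%N.
Proof. by rewrite mulnSr divn_add_Zp -Zp_mulrn. Qed.

Lemma Zp_mulrn_dvd (x : 'Z_p) k : (p %| k)%N -> x *+ k = 0.
Proof. by move/dvdnP=> [q ->]; rewrite mulrnA -mulr_natr pchar_Zp // mulr0. Qed.

Lemma Zp_val_add_carry (x y : 'Z_p) :
  (val x + val y = val (x + y)%R + p * ovf x y)%N.
Proof. by rewrite Zp_val_add ovfE [RHS]addnC mulnC -divn_eq. Qed.

Lemma Zp_nat_eq0 n : ((n%:R : 'Z_p) == 0) = (p %| n)%N.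
Proof. by rewrite -val_eqE /= val_Zp_nat. Qed.

End ZpCarry.

Section Powers.
Variable p : nat.
Hypothesis p_gt1 : (1 < p)%N.
Variables a b : 'Z_p.

Lemma qpowE (x1 x2 x3 : 'Z_p) n :
  qpow a b (x1, x2, x3) n =
  (x1 *+ n + x2 * x3 ^+ 2 *+ oblong_sum n
     + a *+ ((val x2 * n) %/ p) + b *+ ((val x3 * n) %/ p),
   x2 *+ n, x3 *+ n).
Proof.
elim: n => [|n IH]; first by rewrite /qpow /= !muln0 div0n !mulr0n !addr0.
rewrite /qpow iterS -/(qpow a b (x1, x2, x3) n) IH /qmul -!mulrSr.
rewrite !divn_mulSn_Zp //=; congr (_, _, _).
have cross : x2 *+ n.+1 * (x3 *+ n) * x3 = x2 * x3 ^+ 2 *+ (n.+1 * n).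
  by rewrite mulrnAl mulrnAr !mulrnAl -mulrA -expr2 mulnC mulrnA.
rewrite cross (mulrSr x1) !mulrnDr.
(* pair each of the four new summands with the old summand of the same kind *)
by rewrite (ACl ((1*5)*(2*6)*(3*7)*(4*8))%AC).
Qed.

Lemma qpow_mul_p (x1 x2 x3 : 'Z_p) k :
  qpow a b (x1, x2, x3) (k * p) =
  (x2 * x3 ^+ 2 *+ oblong_sum (k * p) + a *+ (val x2 * k) + b *+ (val x3 * k),
   0, 0).
Proof.
have p_gt0 : (0 < p)%N := ltnW p_gt1.
have kp_zero (x : 'Z_p) : x *+ (k * p) = 0 by apply: Zp_mulrn_dvd; rewrite ?dvdn_mull.
by rewrite qpowE !mulnA !mulnK // !kp_zero add0r.
Qed.

Lemma qmul_flat (x1 x2 y1 y2 : 'Z_p) :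
  qmul a b (x1, x2, 0) (y1, y2, 0) = (x1 + y1 + a *+ ovf x2 y2, x2 + y2, 0).
Proof. by rewrite /qmul !mulr0 ovf0r // mulr0n !addr0. Qed.

(* Elements with vanishing third coordinate associate in the middle, by the cocycle identity. *)
Lemma flat_assoc (x z : Qcar p) (y1 y2 : 'Z_p) :
  qmul a b (qmul a b x (y1, y2, 0)) z = qmul a b x (qmul a b (y1, y2, 0) z).
Proof.
move: x z => [[x1 x2] x3] [[z1 z2] z3]; rewrite /qmul.
congr (_, _, _); rewrite ?addrA ?addr0 ?add0r //.
rewrite ovf0r ?ovf0l // !mulr0n !mulr0 !mul0r !addr0.
have := congr1 (fun k => a *+ k) (@ovf_cocycle p p_gt1 x2 y2 z2).
rewrite /= !mulrnDr => cocycle.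
rewrite -(addKr (a *+ ovf x2 y2) (a *+ ovf (x2 + y2) z2)) cocycle.
ring.
Qed.

(* Conversely, testing with x = (0,1,0) and z = (0,0,1) forces y3 = 0. *)
Lemma Nmu_flat (y1 y2 y3 : 'Z_p) : (y1, y2, y3) \in Nmu a b -> y3 = 0.
Proof.
rewrite inE => /forallP /(_ (0, 1, 0)) /forallP /(_ (0, 0, 1)) /eqP.
move=> /(congr1 (fun t : Qcar p => t.1.1)); rewrite /qmul /=.
rewrite ?ovf0r ?ovf0l // !mulr0n !mulr0 !mul0r !addr0 !add0r !mulr1.
by move/eqP; rewrite -subr_eq0 => /eqP <-; ring.
Qed.

Lemma in_Nmu (y1 y2 y3 : 'Z_p) : ((y1, y2, y3) \in Nmu a b) = (y3 == 0).
Proof.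
apply/idP/eqP => [/Nmu_flat //| ->].
by rewrite inE; apply/forallP => x; apply/forallP => z; rewrite flat_assoc.
Qed.

Definition kills (e : nat) : Prop := forall u : Qcar p, qpow a b u e = qone p.

Lemma has_exponent_of_dvd e :
  (0 < e)%N -> kills e -> (forall e', (0 < e')%N -> kills e' -> (e %| e')%N) ->
  has_exponent a b e.
Proof.
move=> e_gt0 kill_e min_e; split=> //; split=> // e' e'_gt0 kill_e'.
exact: dvdn_leq e'_gt0 (min_e e' e'_gt0 kill_e').
Qed.

(* Testing with (1,0,0), whose n-th power is (n, 0, 0): p divides every common exponent. *)
Lemma kills_dvd_p e : kills e -> (p %| e)%N.
Proof.
move=> /(_ (1, 0, 0)) /(congr1 (fun u : Qcar p => u.1.1)).
rewrite qpowE /= !mul0r mul0rn !mul0n div0n !mulr0n !addr0 => e_zero.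
by rewrite -Zp_nat_eq0 // e_zero.
Qed.
End Powers.

Section PrimeExponent.
Variable p : nat.
Hypothesis p_prime : prime p.
Let p_gt1 : (1 < p)%N := prime_gt1 p_prime.
Variables a b : 'Z_p.

Lemma Zp_unit (x : 'Z_p) : x != 0 -> x \is a GRing.unit.
Proof.
move=> x_neq0; rewrite -(natr_Zp x) unitZpE // prime_coprime //.
have x_gt0 : (0 < val x)%N by rewrite lt0n; apply: contra x_neq0 => /eqP x0; apply/eqP/val_inj.
by apply/negP => /(dvdn_leq x_gt0); rewrite leqNgt Zp_val_lt.
Qed.

Lemma Zp_mulrn_eq0 (x : 'Z_p) m : x != 0 -> (x *+ m == 0) = (p %| m)%N.
Proof. by move=> /Zp_unit/mulrI/mulrI_eq0 x_reg; rewrite -mulr_natr x_reg Zp_nat_eq0. Qed.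

Lemma kills_p : a = 0 -> b = 0 -> p != 3%N -> kills a b p.
Proof.
move=> -> -> p_neq3 [[x1 x2] x3].
rewrite -[X in qpow _ _ _ X]mul1n qpow_mul_p // !mul0rn !addr0 Zp_mulrn_dvd //.
by rewrite dvdn_oblong_sum // dvdn_mull.
Qed.

Lemma kills_p2 : kills a b (p ^ 2).
Proof.
have p_dvd_T : (p %| oblong_sum (p * p))%N.
  have [-> | p_neq3] := eqVneq p 3%N; first by rewrite dvd3_oblong_sum_mul3.
  by rewrite dvdn_oblong_sum // dvdn_mull.
move=> [[x1 x2] x3]; rewrite -mulnn qpow_mul_p //.
by rewrite !Zp_mulrn_dvd ?dvdn_mull // !addr0.
Qed.

(* In the non-degenerate case, testing with (0,1,0), (0,0,1) and (0,1,1)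
   shows that m p can only be a common exponent when p | m. *)
Lemma kills_mul_p m :
  (a != 0) || (b != 0) || (p == 3%N) -> kills a b (m * p) -> (p %| m)%N.
Proof.
move=> nondeg kill.
have first_coord (x2 x3 : 'Z_p) := congr1 (fun u : Qcar p => u.1.1) (kill (0, x2, x3)).
have := first_coord 1 0; have := first_coord 0 1; have := first_coord 1 1.
rewrite !qpow_mul_p // Zp_val1 //= expr1n expr2 !mul1r !mul0r mul0rn !mul1n !mul0n !mulr0n !add0r !addr0.
move=> cross_zero b_zero a_zero.
have [a0 | a_neq0] := eqVneq a 0; last by rewrite -(Zp_mulrn_eq0 m a_neq0) a_zero.
have [b0 | b_neq0] := eqVneq b 0; last by rewrite -(Zp_mulrn_eq0 m b_neq0) b_zero.
move: nondeg cross_zero; rewrite a0 b0 eqxx /= => /eqP p3.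
rewrite !mul0rn !addr0 => /eqP; rewrite Zp_nat_eq0 // p3 mulnC.
by rewrite dvd3_oblong_sum_mul3.
Qed.

Lemma kills_dvd_p2 e :
  (a != 0) || (b != 0) || (p == 3%N) -> kills a b e -> (p ^ 2 %| e)%N.
Proof.
move=> nondeg kill_e; have /dvdnP [m e_mp] := kills_dvd_p p_gt1 kill_e.
move: kill_e; rewrite e_mp => /(kills_mul_p nondeg) /dvdnP [k ->].
by rewrite -mulnA mulnn dvdn_mull.
Qed.
End PrimeExponent.

Section NucleusIso.
Variable p : nat.
Hypothesis p_prime : prime p.
Let p_gt1 : (1 < p)%N := prime_gt1 p_prime.
Variables a b : 'Z_p.

(* For a = 0 the nucleus multiplies coordinatewise. *)
Lemma Nmu_iso_Zp_Zp : a = 0 -> iso_to (Nmu a b) (qmul a b) ('Z_p * 'Z_p)%type.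
Proof.
move=> a0; exists (fun t : Qcar p => (t.1.1, t.1.2)); split.
- move=> [[x1 x2] x3] [[y1 y2] y3]; rewrite !in_Nmu // => /eqP -> /eqP -> /=.
  by case=> -> ->.
- by move=> [v1 v2]; exists (v1, v2, 0); rewrite ?in_Nmu.
- move=> [[x1 x2] x3] [[y1 y2] y3]; rewrite !in_Nmu // => /eqP -> /eqP ->.
  by rewrite qmul_flat // a0 mul0rn addr0.
Qed.

Let p2_gt1 : (1 < p ^ 2)%N.
Proof. by rewrite -mulnn; nia. Qed.

Definition Zp_lift (c : 'Z_p) : 'Z_(p ^ 2) := (p * val c)%:R.

Lemma Zp_lift_add (c d : 'Z_p) : Zp_lift (c + d) = Zp_lift c + Zp_lift d.
Proof. by rewrite /Zp_lift -natrD -mulnDr Zp_val_add // muln_modr mulnn Zp_nat_mod. Qed.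

(* For a <> 0 the nucleus element (y1, y2, 0) gets the base-p digits (y2, y1 / a) in Z_(p^2). *)
Definition nucleus_coord (t : Qcar p) : 'Z_(p ^ 2) :=
  (val t.1.2)%:R + Zp_lift (t.1.1 / a).

(* The two digits fit below p^2, so nucleus_coord does not wrap around. *)
Lemma nucleus_coord_val (y1 y2 y3 : 'Z_p) :
  nucleus_coord (y1, y2, y3) = (val y2 + p * val (y1 / a))%N :> nat.
Proof.
have digits_lt : (val y2 + p * val (y1 / a) < p ^ 2)%N.
  by have := Zp_val_lt p_gt1 y2; have := Zp_val_lt p_gt1 (y1 / a); rewrite -mulnn; nia.
by rewrite /nucleus_coord /Zp_lift -natrD val_Zp_nat ?modn_small.
Qed.

(* The carry ovf x2 y2 of the second coordinate becomes a carry into the digit y1 / a. *)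
Lemma nucleus_coordM (x1 x2 y1 y2 : 'Z_p) : a != 0 ->
  nucleus_coord (qmul a b (x1, x2, 0) (y1, y2, 0)) =
  nucleus_coord (x1, x2, 0) + nucleus_coord (y1, y2, 0).
Proof.
move=> a_neq0; rewrite qmul_flat // /nucleus_coord /=.
rewrite !mulrDl mulrnAl mulrV ?Zp_unit // !Zp_lift_add.
have lift_carry : Zp_lift (1 *+ ovf x2 y2) = (p * ovf x2 y2)%:R.
  by case: (ovf x2 y2); rewrite /Zp_lift ?Zp_val1.
have digit_sum : (val x2)%:R + (val y2)%:R = (val (x2 + y2))%:R + (p * ovf x2 y2)%:R :> 'Z_(p ^ 2).
  by rewrite -!natrD Zp_val_add_carry.
by rewrite lift_carry [RHS]addrACA digit_sum; ring.
Qed.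

Lemma Nmu_iso_Zp2 : a != 0 -> iso_to (Nmu a b) (qmul a b) 'Z_(p ^ 2).
Proof.
move=> a_neq0; have p_gt0 : (0 < p)%N := ltnW p_gt1.
exists nucleus_coord; split.
- move=> [[x1 x2] x3] [[y1 y2] y3]; rewrite !in_Nmu // => /eqP -> /eqP ->.
  move=> /(congr1 (@nat_of_ord _)); rewrite !nucleus_coord_val => digits_eq.
  have [low_eq high_eq] :=
    base_p_digits_inj p_gt0 (Zp_val_lt p_gt1 _) (Zp_val_lt p_gt1 _) digits_eq.
  move: low_eq high_eq => /val_inj -> /val_inj div_eq.
  have a_unit := Zp_unit p_prime a_neq0.
  by rewrite -(divrK a_unit x1) div_eq divrK.
- move=> v; exists (inZp (v %/ p) * a, inZp (v %% p), 0); first by rewrite in_Nmu.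
  have v_lt : (v < p ^ 2)%N by rewrite -[X in (_ < X)%N](Zp_cast p2_gt1).
  have quo_lt : (v %/ p < p)%N by rewrite ltn_divLR // mulnn.
  apply: ord_inj; rewrite nucleus_coord_val mulrK ?Zp_unit // !Zp_val_inZp //.
  by rewrite modn_mod (modn_small quo_lt) addnC mulnC -divn_eq.
- move=> [[x1 x2] x3] [[y1 y2] y3]; rewrite !in_Nmu // => /eqP -> /eqP ->.
  exact: nucleus_coordM.
Qed.
End NucleusIso.

Theorem lemma5p5 (p : nat) (a b : 'Z_p) : prime p ->
  [/\ (a = 0 /\ b = 0 /\ p != 3%N -> has_exponent a b p),
      ((a != 0) || (b != 0) || (p == 3%N) -> has_exponent a b (p ^ 2)%N),
      (a = 0 -> iso_to (Nmu a b) (qmul a b) ('Z_p * 'Z_p)%type) &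
      (a != 0 -> iso_to (Nmu a b) (qmul a b) 'Z_(p ^ 2))].
Proof.
move=> p_prime; have p_gt1 := prime_gt1 p_prime.
split; [| | exact: Nmu_iso_Zp_Zp | exact: Nmu_iso_Zp2].
- case=> a0 [b0 p_neq3].
  apply: has_exponent_of_dvd (prime_gt0 p_prime) (kills_p p_prime a0 b0 p_neq3) _.
  by move=> e _; apply: kills_dvd_p.
- move=> nondeg; apply: has_exponent_of_dvd (kills_p2 p_prime a b) _.
    by rewrite expn_gt0 prime_gt0.
  by move=> e _; apply: kills_dvd_p2.
Qed.
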